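(* Let $Q=(q_n)_{n\ge1}$ be a basic sequence that is infinite in limit, and suppose there exist constants $M$ and $t$ such that $\nu_{i+1}-\nu_i\le Mi$ for all $i>t$. Then $l_i\le\lceil M+1\rceil$ for all $i>t$.
   Context: A basic sequence is a sequence $Q=(q_n)_{n\ge1}$ of integers with $q_n\ge 2$; it is infinite in limit if $q_n\to\infty$. $\mathbb{N}$ denotes the positive integers. For each positive integer $j$ let $\nu_j=\min\{N : q_m\ge 2j^2 \text{ for all } m\ge N\}$. Define $l_1=\max(\nu_2-1,1)$ and, recursively for $i\ge 2$, $l_i=\max\big(\min\{k\in\mathbb{N} : l_1+2l_2+\cdots+(i-1)l_{i-1}+ik\ge \nu_{i+1}-1\},1\big)$. *)

From Stdlib Require Import ClassicalEpsilon.
From mathcomp Require Import all_boot all_order all_algebra.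
From mathcomp Require Import reals.
Set Implicit Arguments. Unset Strict Implicit. Unset Printing Implicit Defensive.

(* A sequence q_1, q_2, ... is modelled by q : nat -> nat (q 0 is ignored). *)
Definition basic_seq (q : nat -> nat) : Prop := forall n, 0 < n -> 2 <= q n.

Definition infinite_in_limit (q : nat -> nat) : Prop :=
  forall B, exists N, forall m, N <= m -> B <= q m.

Definition nu_spec (q : nat -> nat) (j N : nat) : Prop :=
  [/\ 0 < N, (forall m, N <= m -> 2 * j ^ 2 <= q m)
    & forall N', 0 < N' -> (forall m, N' <= m -> 2 * j ^ 2 <= q m) -> N <= N'].

(* nu_j (well-defined and satisfying nu_spec whenever such a minimum exists,
   e.g. when q is infinite in limit). *)
Definition nu (q : nat -> nat) (j : nat) : nat :=
  epsilon (inhabits 0) (nu_spec q j).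

Lemma lstep_ex (S i target : nat) :
  exists k, (0 < k) && (target <= S + i.+1 * k).
Proof.
exists target.+1; apply/andP; split => //.
apply: leq_trans (leq_addl S _).
by rewrite mulSn; apply: leq_trans (leqnSn target) (leq_addr _ _).
Qed.

Definition lstep (S i target : nat) : nat := ex_minn (lstep_ex S i target).

(* lS q n = (l_n, l_1 + 2 l_2 + ... + n l_n) for n >= 1. *)
Fixpoint lS (q : nat -> nat) (n : nat) : nat * nat :=
  match n with
  | 0 => (0, 0)
  | 1 => let l1 := maxn (nu q 2 - 1) 1 in (l1, l1)
  | (i.+1) as n' =>
      let S := (lS q i).2 in
      let li := maxn (lstep S i (nu q n'.+1 - 1)) 1 in
      (li, S + n' * li)
  end.

Definition l (q : nat -> nat) (i : nat) : nat := (lS q i).1.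

(* The partial sums S_i = l_1 + 2 l_2 + ... + i l_i satisfy S_i >= nu_(i+1) - 1 by
   construction, and l_i is the least k >= 1 with S_(i-1) + i k >= nu_(i+1) - 1.
   Hence if l_i > 1, minimality gives nu_i - 1 + i (l_i - 1) <= S_(i-1) + i (l_i - 1)
   < nu_(i+1) - 1, i.e. i (l_i - 1) <= nu_(i+1) - nu_i <= M i, so l_i <= M + 1.
   For i = 1 the same bound holds directly, as nu_1 = 1 for a basic sequence. *)
From Stdlib Require Import ClassicalEpsilon Classical.
From mathcomp Require Import all_boot all_order all_algebra.
From mathcomp Require Import reals.
From mathcomp Require Import zify.
Import Order.TTheory GRing.Theory Num.Theory.

Set Implicit Arguments.
Unset Strict Implicit.

Lemma classical_ex_min (P : nat -> Prop) :
  (exists n, P n) -> exists n, P n /\ forall m, P m -> n <= m.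
Proof.
move=> [n Pn]; elim: n {-2}n (leqnn n) Pn => [|k IHk] n le_nk Pn.
  by exists n; split=> // m _; move: le_nk; rewrite leqn0 => /eqP->.
have [[m [lt_mn Pm]] | no_smaller] := classic (exists m, m < n /\ P m).
  by apply: (IHk m) => //; lia.
exists n; split=> // m Pm; rewrite leqNgt; apply/negP => lt_mn.
by apply: no_smaller; exists m.
Qed.

Section Nu.

Variable q : nat -> nat.
Hypothesis q_inf : infinite_in_limit q.

Lemma nuP j : nu_spec q j (nu q j).
Proof.
rewrite /nu; apply: epsilon_spec.
have [N le_q] := q_inf (2 * j ^ 2).
have [n [[n_gt0 nu_n] n_min]] := @classical_ex_min
  (fun N' => 0 < N' /\ forall m, N' <= m -> 2 * j ^ 2 <= q m)
  (ex_intro _ N.+1 (conj (ltn0Sn N) (fun m le_Nm => le_q m (ltnW le_Nm)))).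
by exists n; split=> // N' N'_gt0 nu_N'; apply: n_min.
Qed.

Lemma nu_gt0 j : 0 < nu q j.
Proof. by case: (nuP j). Qed.

Lemma nu_leqS j : nu q j <= nu q j.+1.
Proof.
case: (nuP j) => _ _ nu_min; case: (nuP j.+1) => nuS_gt0 nuS_bound _.
apply: nu_min => // m le_m; apply: leq_trans (nuS_bound m le_m).
by rewrite leq_mul2l /= leq_exp2r.
Qed.

Lemma nu1 : basic_seq q -> nu q 1 = 1.
Proof.
move=> q_basic; case: (nuP 1) => nu_gt0' _ nu_min.
by apply/eqP; rewrite eqn_leq nu_gt0' andbT; apply: nu_min => // m; apply: q_basic.
Qed.

End Nu.

Section Lstep.

Variables S i T : nat.

Lemma lstep_gt0 : 0 < lstep S i T.
Proof. by rewrite /lstep; case: ex_minnP => k /andP[]. Qed.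

Lemma lstep_ge : T <= S + i.+1 * lstep S i T.
Proof. by rewrite /lstep; case: ex_minnP => k /andP[]. Qed.

Lemma lstep_pred_lt : 1 < lstep S i T -> S + i.+1 * (lstep S i T).-1 < T.
Proof.
rewrite /lstep; case: ex_minnP => k _ k_min lt_1k; rewrite ltnNge.
apply/negP => le_T; have := k_min k.-1; rewrite le_T andbT; lia.
Qed.

End Lstep.

Lemma lS_S q i : 0 < i ->
  lS q i.+1 = (lstep (lS q i).2 i (nu q i.+2 - 1),
               (lS q i).2 + i.+1 * lstep (lS q i).2 i (nu q i.+2 - 1)).
Proof. by case: i => // i _; rewrite /= (maxn_idPl (lstep_gt0 _ _ _)). Qed.

Lemma lS_sum_ge q i : 0 < i -> nu q i.+1 - 1 <= (lS q i).2.
Proof.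
case: i => [//|[|i]] _; first by rewrite /= leq_maxl.
by rewrite lS_S //=; apply: lstep_ge.
Qed.

Lemma l_gap_bound q i : basic_seq q -> infinite_in_limit q -> 0 < i ->
  (l q i - 1) * i <= nu q i.+1 - nu q i.
Proof.
move=> q_basic q_inf; case: i => [//|[|i]] _.
  by rewrite /l /= nu1 // muln1 /maxn; case: ifP; lia.
have S_ge := @lS_sum_ge q i.+1 (ltn0Sn i).
rewrite /l lS_S //; set S := (lS q i.+1).2 in S_ge *; rewrite /=.
set k := lstep _ _ _.
have := nu_gt0 q_inf i.+2.
have [lt_1k | le_k1] := ltnP 1 k; last by have -> : k - 1 = 0 by lia.
have := lstep_pred_lt lt_1k; rewrite -/k; lia.
Qed.

Local Open Scope ring_scope.

Theorem mainTheorem17 (R : realType) (q : nat -> nat) (M t : R) :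
  basic_seq q -> infinite_in_limit q ->
  (forall i : nat, (0 < i)%N -> t < i%:R ->
     ((nu q i.+1)%:R - (nu q i)%:R <= M * i%:R)) ->
  forall i : nat, (0 < i)%N -> t < i%:R ->
    ((l q i)%:Z <= Num.ceil (M + 1))%R.
Proof.
move=> q_basic q_inf gap_le i i_gt0 t_lt_i.
have i_pos : (0 : R) < i%:R by rewrite ltr0n.
have gap := gap_le i i_gt0 t_lt_i.
rewrite -(natrB _ (nu_leqS q_inf i)) in gap.
have l_pred_le : (l q i - 1)%:R <= M :> R.
  rewrite -(ler_pM2r i_pos); apply: le_trans gap.
  by rewrite -natrM ler_nat l_gap_bound.
have l_le : (l q i)%:R <= M + 1 :> R.
  apply: le_trans (_ : (l q i - 1)%:R + 1 <= _); last by rewrite lerD2r.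
  by rewrite natr1 ler_nat; lia.
by rewrite -[leLHS](intrKceil (R := R)); apply: le_ceil.
Qed.
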